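(* Let $X$ be a continuum, let $n\geq2$ be an integer, and let $f:X\to X$ be a map. Consider the statements: (1) $f$ is $\triangle$-transitive; (2) $F_n(f)$ is $\triangle$-transitive; (3) $SF_n(f)$ is $\triangle$-transitive. Then (2) implies (1), and (2) implies (3).
   Context: A continuum is a nonempty compact connected metric space. $F_n(X)$ is the set of nonempty subsets of $X$ with at most $n$ points, with the Hausdorff metric topology; $F_1(X)=\{\{x\}:x\in X\}$; $F_n(f)(A)=f(A)$. $SF_n(X)=F_n(X)/F_1(X)$ is the quotient collapsing $F_1(X)$ to a point, $q$ the quotient map, $F_X=q(F_1(X))$, and $SF_n(f)(\chi)=q(F_n(f)(q^{-1}(\chi)))$ for $\chi\neq F_X$, $SF_n(f)(F_X)=F_X$. A map $g:Z\to Z$ is $\triangle$-transitive if for every $m\in\mathbb{N}$ there is a dense subset $Y\subseteq Z$ such that for each $y\in Y$ the set $\{(g^k(y),g^{2k}(y),\dots,g^{mk}(y)):k\in\mathbb{Z}_+\}$ is dense in $Z^m$. *)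

From Stdlib Require Import Reals List Arith ClassicalDescription.
Open Scope R_scope.

(** * Generic topological notions relative to a subspace S of a carrier T
    with a family of open sets [opn]; the subspace topology has opens U ∩ S. *)

Definition dense_in {T : Type} (S : T -> Prop) (opn : (T -> Prop) -> Prop)
  (Y : T -> Prop) : Prop :=
  forall U, opn U -> (exists x, S x /\ U x) -> exists y, Y y /\ U y.

(* points of S^m, represented as functions nat -> T (coordinates 0..m-1) *)
Definition prod_pts {T : Type} (S : T -> Prop) (m : nat) (x : nat -> T) : Prop :=
  forall i, (i < m)%nat -> S (x i).

Definition prod_open {T : Type} (S : T -> Prop) (opn : (T -> Prop) -> Prop)
  (m : nat) (W : (nat -> T) -> Prop) : Prop :=
  forall x, prod_pts S m x -> W x ->
    exists U : nat -> T -> Prop,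
      (forall i, (i < m)%nat -> opn (U i) /\ U i (x i)) /\
      (forall z, prod_pts S m z -> (forall i, (i < m)%nat -> U i (z i)) -> W z).

Definition orbit_tuples {T : Type} (g : T -> T) (m : nat) (y : T)
  (x : nat -> T) : Prop :=
  exists k : nat, (1 <= k)%nat /\
    forall i, (i < m)%nat -> x i = Nat.iter ((i + 1) * k) g y.

Definition tri_transitive {T : Type} (S : T -> Prop)
  (opn : (T -> Prop) -> Prop) (g : T -> T) : Prop :=
  forall m : nat, (1 <= m)%nat ->
    exists Y : T -> Prop,
      (forall y, Y y -> S y) /\ dense_in S opn Y /\
      forall y, Y y -> dense_in (prod_pts S m) (prod_open S opn m)
                                (orbit_tuples g m y).

Definition is_metric {X : Type} (d : X -> X -> R) : Prop :=
  (forall x y, 0 <= d x y) /\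
  (forall x y, d x y = 0 <-> x = y) /\
  (forall x y, d x y = d y x) /\
  (forall x y z, d x z <= d x y + d y z).

Definition metric_open {X : Type} (d : X -> X -> R) (U : X -> Prop) : Prop :=
  forall x, U x -> exists e, 0 < e /\ forall y, d x y < e -> U y.

Definition compact_space {X : Type} (d : X -> X -> R) : Prop :=
  forall (I : Type) (U : I -> X -> Prop),
    (forall i, metric_open d (U i)) -> (forall x, exists i, U i x) ->
    exists l : list I, forall x, exists i, In i l /\ U i x.

Definition connected_space {X : Type} (d : X -> X -> R) : Prop :=
  ~ exists U V : X -> Prop,
      metric_open d U /\ metric_open d V /\
      (exists x, U x) /\ (exists x, V x) /\
      (forall x, ~ (U x /\ V x)) /\ (forall x, U x \/ V x).

Definition continuum {X : Type} (d : X -> X -> R) : Prop :=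
  is_metric d /\ (exists x : X, True) /\ compact_space d /\ connected_space d.

Definition continuous_map {X : Type} (d : X -> X -> R) (f : X -> X) : Prop :=
  forall x e, 0 < e -> exists delta, 0 < delta /\
    forall y, d x y < delta -> d (f x) (f y) < e.

Definition Fn_pts {X : Type} (n : nat) (A : X -> Prop) : Prop :=
  (exists x, A x) /\
  exists l : list X, (length l <= n)%nat /\ forall x, A x <-> In x l.

(* For nonempty finite A, B: H(A,B) < e, H the Hausdorff metric
   H(A,B) = max(max_{a in A} d(a,B), max_{b in B} d(b,A)). *)
Definition hausdorff_lt {X : Type} (d : X -> X -> R) (A B : X -> Prop) (e : R)
  : Prop :=
  (forall a, A a -> exists b, B b /\ d a b < e) /\
  (forall b, B b -> exists a, A a /\ d a b < e).

Definition Fn_open {X : Type} (d : X -> X -> R) (n : nat)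
  (U : (X -> Prop) -> Prop) : Prop :=
  forall A, Fn_pts n A -> U A ->
    exists e, 0 < e /\ forall B, Fn_pts n B -> hausdorff_lt d A B e -> U B.

Definition Fn_map {X : Type} (f : X -> X) (A : X -> Prop) : X -> Prop :=
  fun y => exists x, A x /\ y = f x.

(** * The quotient SF_n(X) = F_n(X)/F_1(X)
    Carrier: option (X -> Prop); None is the point F_X, Some A (A in
    F_n(X) \ F_1(X)) the class of A. *)

Definition is_singleton {X : Type} (A : X -> Prop) : Prop :=
  exists x, forall y, A y <-> y = x.

Definition q_map {X : Type} (A : X -> Prop) : option (X -> Prop) :=
  if excluded_middle_informative (is_singleton A) then None else Some A.

Definition SF_pts {X : Type} (n : nat) (c : option (X -> Prop)) : Prop :=
  match c with
  | None => True
  | Some A => Fn_pts n A /\ ~ is_singleton A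
  end.

Definition SF_open {X : Type} (d : X -> X -> R) (n : nat)
  (V : option (X -> Prop) -> Prop) : Prop :=
  Fn_open d n (fun A => V (q_map A)).

Definition SF_map {X : Type} (f : X -> X) (c : option (X -> Prop))
  : option (X -> Prop) :=
  match c with
  | None => None
  | Some A => q_map (Fn_map f A)
  end.

(* The hyperspace F_n(X) is related to X by membership and to SF_n(X) by the
   quotient map q.  Both relations R commute with the induced maps, are upper
   semicontinuous (the A whose R-image lies in an open set form an open set;
   for membership this is the Hausdorff-openness of {A | A ⊆ U}), relate every
   point to something, and admit a lift with singleton fibres ({x} over x, a
   representative over a class).  Such a relation carries a dense set forward
   to a dense set, and dense orbit tuples of A to dense orbit tuples of any y
   related to A, because a box of open sets around a tuple c pulls back to an
   open set containing the tuple of lifts of c. *)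
From Stdlib Require Import Reals List Lra Lia ClassicalDescription.
Open Scope R_scope.

Section RelatedSystems.

Variables (T T' : Type).
Variables (S : T -> Prop) (opn : (T -> Prop) -> Prop) (g : T -> T).
Variables (S' : T' -> Prop) (opn' : (T' -> Prop) -> Prop) (g' : T' -> T').
Variables (R : T -> T' -> Prop) (s : T' -> T).

Hypothesis R_total : forall A, S A -> exists x, S' x /\ R A x.
Hypothesis R_upper : forall V, opn' V -> opn (fun A => forall x, R A x -> V x).
Hypothesis R_equivariant : forall A x, R A x -> R (g A) (g' x).
Hypothesis s_pts : forall x, S' x -> S (s x).
Hypothesis s_fibre : forall x y, S' x -> R (s x) y -> y = x.
Hypothesis g'_pts : forall x, S' x -> S' (g' x).

Lemma iter_related j A x : R A x -> R (Nat.iter j g A) (Nat.iter j g' x).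
Proof.
  intros HAx; induction j as [|j IH]; simpl; auto.
Qed.

Lemma prod_open_related m (U : nat -> T' -> Prop) :
  (forall i, (i < m)%nat -> opn' (U i)) ->
  prod_open S opn m
    (fun Z => forall i, (i < m)%nat -> forall x, R (Z i) x -> U i x).
Proof.
  intros HU Z _ HZ.
  exists (fun i A => forall x, R A x -> U i x); split.
  - intros i Hi; split; [apply R_upper, HU, Hi | apply HZ, Hi].
  - intros Z' _ HZ' i Hi; apply HZ', Hi.
Qed.

Lemma dense_in_related (Y : T -> Prop) :
  (forall A, Y A -> S A) -> dense_in S opn Y ->
  dense_in S' opn' (fun x => S' x /\ exists A, Y A /\ R A x).
Proof.
  intros HYS HY V HV [y [Hy Vy]].
  destruct (HY _ (R_upper V HV)) as [A [YA HAV]].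
  - exists (s y); split; [apply s_pts, Hy|].
    intros x Hx; rewrite (s_fibre _ _ Hy Hx); exact Vy.
  - destruct (R_total A (HYS A YA)) as [x [Hx HAx]].
    exists x; split; [split|]; eauto.
Qed.

Lemma orbit_tuples_dense_related m A y :
  R A y -> S' y ->
  dense_in (prod_pts S m) (prod_open S opn m) (orbit_tuples g m A) ->
  dense_in (prod_pts S' m) (prod_open S' opn' m) (orbit_tuples g' m y).
Proof.
  intros HAy Hy HA W HW [c [Hc Wc]].
  destruct (HW c Hc Wc) as [U [HU HUW]].
  destruct (HA _ (prod_open_related m U (fun i Hi => proj1 (HU i Hi))))
    as [Z [[k [Hk HZ]] HZU]].
  - exists (fun i => s (c i)); split.
    + intros i Hi; apply s_pts, Hc, Hi.
    + intros i Hi x Hx; rewrite (s_fibre _ _ (Hc i Hi) Hx); apply HU, Hi.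
  - exists (fun i => Nat.iter ((i + 1) * k) g' y); split.
    + exists k; split; auto.
    + apply HUW.
      * intros i _; apply Nat.iter_invariant; auto.
      * intros i Hi; apply (HZU i Hi); rewrite HZ by exact Hi.
        apply iter_related, HAy.
Qed.

Theorem tri_transitive_related :
  tri_transitive S opn g -> tri_transitive S' opn' g'.
Proof.
  intros HT m Hm; destruct (HT m Hm) as [Y [HYS [HYd HYo]]].
  exists (fun x => S' x /\ exists A, Y A /\ R A x); split; [|split].
  - intros x [Hx _]; exact Hx.
  - apply dense_in_related; auto.
  - intros y [Hy [A [YA HAy]]]; eapply orbit_tuples_dense_related; eauto.
Qed.

End RelatedSystems.

Section Hyperspaces.

Variables (X : Type) (d : X -> X -> R) (n : nat) (f : X -> X).
Hypothesis n_pos : (1 <= n)%nat.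

Lemma Fn_pts_singleton (x : X) : Fn_pts n (fun y => y = x).
Proof.
  split; [exists x; reflexivity|].
  exists (x :: nil); split; [simpl; lia|].
  intros y; simpl; split; [auto | intros [H|[]]; auto].
Qed.

Lemma Fn_map_pts (A : X -> Prop) : Fn_pts n A -> Fn_pts n (Fn_map f A).
Proof.
  intros [[a Ha] [l [Hl HA]]]; split; [exists (f a), a; auto|].
  exists (map f l); split; [rewrite length_map; exact Hl|].
  intros y; rewrite in_map_iff; split.
  - intros [x [Hx ->]]; exists x; split; [reflexivity | apply HA, Hx].
  - intros [x [<- Hx]]; exists x; split; [apply HA, Hx | reflexivity].
Qed.

Lemma metric_open_uniform (U : X -> Prop) (l : list X) :
  metric_open d U -> (forall x, In x l -> U x) ->
  exists e, 0 < e /\ forall x y, In x l -> d x y < e -> U y.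
Proof.
  intros HU; induction l as [|a l IH]; intros Hl.
  - exists 1; split; [lra | intros x y []].
  - destruct IH as [e [He Hl']]; [intros x Hx; apply Hl; right; exact Hx|].
    destruct (HU a (Hl a (or_introl eq_refl))) as [e' [He' Ha]].
    exists (Rmin e e'); split; [apply Rmin_pos; auto|].
    intros x y [<-|Hx] Hy.
    + apply Ha; eapply Rlt_le_trans; [exact Hy | apply Rmin_r].
    + apply (Hl' x y Hx); eapply Rlt_le_trans; [exact Hy | apply Rmin_l].
Qed.

Lemma Fn_open_subsets (U : X -> Prop) :
  metric_open d U -> Fn_open d n (fun A => forall y, A y -> U y).
Proof.
  intros HU A [_ [l [_ Hl]]] HA.
  destruct (metric_open_uniform U l HU) as [e [He Hle]].
  { intros x Hx; apply HA, Hl, Hx. }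
  exists e; split; [exact He|].
  intros B _ [_ HB] b Hb; destruct (HB b Hb) as [a [Ha Hab]].
  apply (Hle a); [apply Hl, Ha | exact Hab].
Qed.

Theorem tri_transitive_Fn_base :
  tri_transitive (Fn_pts n) (Fn_open d n) (Fn_map f) ->
  tri_transitive (fun _ : X => True) (metric_open d) f.
Proof.
  apply (tri_transitive_related _ _ _ _ _ _ _ _ (fun A x => A x)
           (fun x y => y = x)).
  - intros A [[a Ha] _]; exists a; auto.
  - exact Fn_open_subsets.
  - intros A x Hx; exists x; auto.
  - intros x _; apply Fn_pts_singleton.
  - auto.
  - auto.
Qed.

Lemma q_map_singleton (A : X -> Prop) : is_singleton A -> q_map A = None.
Proof.
  intros H; unfold q_map; destruct (excluded_middle_informative _); tauto.
Qed.

Lemma q_map_nonsingleton (A : X -> Prop) : ~ is_singleton A -> q_map A = Some A.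
Proof.
  intros H; unfold q_map; destruct (excluded_middle_informative _); tauto.
Qed.

Lemma SF_pts_q_map (A : X -> Prop) : Fn_pts n A -> SF_pts n (q_map A).
Proof.
  intros H; unfold q_map; destruct (excluded_middle_informative _); simpl; auto.
Qed.

Lemma SF_map_q_map (A : X -> Prop) : SF_map f (q_map A) = q_map (Fn_map f A).
Proof.
  unfold q_map at 1.
  destruct (excluded_middle_informative (is_singleton A)) as [[x Hx]|_];
    [|reflexivity].
  symmetry; apply q_map_singleton; exists (f x); intros y; split.
  - intros [z [Hz ->]]; apply Hx in Hz; subst; reflexivity.
  - intros ->; exists x; split; [apply Hx; reflexivity | reflexivity].
Qed.

Lemma SF_map_pts (c : option (X -> Prop)) :
  SF_pts n c -> SF_pts n (SF_map f c).
Proof.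
  destruct c as [A|]; simpl; [intros [HA _] | auto].
  apply SF_pts_q_map, Fn_map_pts, HA.
Qed.

Lemma SF_open_fibres (V : option (X -> Prop) -> Prop) :
  SF_open d n V -> Fn_open d n (fun A => forall c, q_map A = c -> V c).
Proof.
  intros HV A HA HAV; destruct (HV A HA (HAV _ eq_refl)) as [e [He HB]].
  exists e; split; [exact He|].
  intros B HBn HAB c <-; exact (HB B HBn HAB).
Qed.

Definition SF_lift (x0 : X) (c : option (X -> Prop)) : X -> Prop :=
  match c with None => fun y => y = x0 | Some B => B end.

Lemma q_map_SF_lift (x0 : X) (c : option (X -> Prop)) :
  SF_pts n c -> q_map (SF_lift x0 c) = c.
Proof.
  destruct c as [B|]; simpl; [intros [_ HB] | intros _].
  - apply q_map_nonsingleton, HB.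
  - apply q_map_singleton; exists x0; tauto.
Qed.

Lemma Fn_pts_SF_lift (x0 : X) (c : option (X -> Prop)) :
  SF_pts n c -> Fn_pts n (SF_lift x0 c).
Proof.
  destruct c as [B|]; simpl; [intros [HB _]; exact HB | intros _].
  apply Fn_pts_singleton.
Qed.

Theorem tri_transitive_Fn_SF (x0 : X) :
  tri_transitive (Fn_pts n) (Fn_open d n) (Fn_map f) ->
  tri_transitive (SF_pts n) (SF_open d n) (SF_map f).
Proof.
  apply (tri_transitive_related _ _ _ _ _ _ _ _ (fun A c => q_map A = c)
           (SF_lift x0)).
  - intros A HA; exists (q_map A); split; [apply SF_pts_q_map, HA | reflexivity].
  - exact SF_open_fibres.
  - intros A x <-; symmetry; apply SF_map_q_map.
  - intros c; apply Fn_pts_SF_lift.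
  - intros c c' Hc <-; apply q_map_SF_lift, Hc.
  - exact SF_map_pts.
Qed.

End Hyperspaces.

Theorem theorem10 (X : Type) (d : X -> X -> R) (n : nat) (f : X -> X) :
  continuum d -> (2 <= n)%nat -> continuous_map d f ->
  tri_transitive (Fn_pts n) (Fn_open d n) (Fn_map f) ->
  tri_transitive (fun _ : X => True) (metric_open d) f /\
  tri_transitive (SF_pts n) (SF_open d n) (SF_map f).
Proof.
  intros [_ [[x0 _] _]] Hn _ HT.
  assert (n_pos : (1 <= n)%nat) by lia.
  split.
  - exact (tri_transitive_Fn_base X d n f n_pos HT).
  - exact (tri_transitive_Fn_SF X d n f n_pos x0 HT).
Qed.
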